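(* Let $A$ be a ring satisfying all of the following conditions: (1) every element of $A$ is nilpotent or regular; (2) $A$ has Krull dimension at most $1$; (3) for every ideal $I$ of $A$, if $\mathrm{Jac}_A I$ contains a regular element, then $I$ contains a regular element. Then $A$ is Jacobson. In particular, $\mathbb{Z}$ is Jacobson.
   Context: All rings are commutative with identity. The setting is constructive mathematics: no law of excluded middle and no Zorn's lemma, so ''or'' is a constructive disjunction. An element is regular if it is a non-zero-divisor. For a ring $A$ and a subset $U\subseteq A$, $\langle U\rangle_A$ denotes the ideal generated by $U$. Define $\mathrm{Nil}_A U:=\{a\in A:\exists n\ge 0,\ a^n\in\langle U\rangle_A\}$ and $\mathrm{Jac}_A U:=\{a\in A:\forall b\in A,\ 1\in\langle U\cup\{1-ab\}\rangle_A\}$. A ring $A$ is called Jacobson if every ideal $I$ of $A$ satisfies $\mathrm{Jac}_A I\subseteq \mathrm{Nil}_A I$. For $n\ge -1$, a ring $A$ has Krull dimension at most $n$ if for all $x_0,\dots,x_n\in A$ there exist $e_0,\dots,e_n\ge 0$ such that $x_0^{e_0}\cdots x_n^{e_n}\in\langle x_0^{e_0+1},\ x_0^{e_0}x_1^{e_1+1},\ \dots,\ x_0^{e_0}\cdots x_{n-1}^{e_{n-1}}x_n^{e_n+1}\rangle$. *)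

(* Rings: commutative rings with identity (possibly trivial),
   i.e. comPzRingType. Subsets and ideals are Prop-valued predicates (no
   decidability assumed; the setting is constructive). *)
From mathcomp Require Import all_boot all_algebra.
Set Implicit Arguments. Unset Strict Implicit. Unset Printing Implicit Defensive.
Import GRing.Theory.
Local Open Scope ring_scope.

Definition regular (A : comPzRingType) (a : A) : Prop :=
  forall b : A, a * b = 0 -> b = 0.

Definition nilpotent_el (A : comPzRingType) (a : A) : Prop :=
  exists n : nat, a ^+ n = 0.

Definition gen_ideal (A : comPzRingType) (U : A -> Prop) (a : A) : Prop :=
  exists (n : nat) (r u : 'I_n -> A),
    (forall i, U (u i)) /\ a = \sum_(i < n) r i * u i.

Definition is_ideal (A : comPzRingType) (I : A -> Prop) : Prop :=
  [/\ I 0, (forall x y, I x -> I y -> I (x + y)) & (forall r x, I x -> I (r * x))].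

Definition Nil (A : comPzRingType) (U : A -> Prop) (a : A) : Prop :=
  exists n : nat, gen_ideal U (a ^+ n).

Definition Jac (A : comPzRingType) (U : A -> Prop) (a : A) : Prop :=
  forall b : A, gen_ideal (fun x => U x \/ x = 1 - a * b) 1.

Definition Jacobson (A : comPzRingType) : Prop :=
  forall I : A -> Prop, is_ideal I -> forall a : A, Jac I a -> Nil I a.

(* Krull dimension at most n (n >= 0; index i ranges over 0..n):
   for all x_0..x_n there are e_0..e_n with
   x_0^e_0 ... x_n^e_n \in < x_0^e_0 ... x_(i-1)^e_(i-1) x_i^(e_i+1) | i <= n >. *)
Definition krull_dim_le (A : comPzRingType) (n : nat) : Prop :=
  forall x : 'I_n.+1 -> A, exists e : 'I_n.+1 -> nat,
    gen_ideal
      (fun y => exists i : 'I_n.+1,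
         y = (\prod_(j < n.+1 | (j < i)%N) x j ^+ e j) * x i ^+ (e i).+1)
      (\prod_(j < n.+1) x j ^+ e j).

(** Let [a] be regular and in [Jac I]. By hypothesis [I] contains a regular
    element [r]. Krull dimension at most one, applied to [(r, a)], gives
    [r^e0 a^e1 = s r^(e0+1) + t r^e0 a^(e1+1)]; cancelling the regular factor
    [r^e0] yields [a^e1 (1 - a t) = s r], an element of [I]. Since [1 - a t]
    is invertible modulo [I], [a^e1] lies in [I].
    For [Z], every nonzero integer is regular, the Krull condition comes from
    the stabilisation of [gcd(x0, x1^k)] and Bezout, and an ideal whose Jacobson
    radical contains a nonzero [a] must be nonzero since [1 - 3a] is not a unit. *)
From mathcomp Require Import all_boot all_algebra zify.
Set Implicit Arguments. Unset Strict Implicit. Unset Printing Implicit Defensive.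
Import GRing.Theory.
Local Open Scope ring_scope.

Lemma big_ord2 (R : Type) (idx : R) (op : Monoid.law idx) (F : 'I_2 -> R) :
  \big[op/idx]_(i < 2) F i = op (F ord0) (F ord_max).
Proof. by rewrite big_ord_recl big_ord1; congr (op _ (F _)); apply: val_inj. Qed.

Lemma ord2_cases (i : 'I_2) : i = ord0 \/ i = ord_max.
Proof. by case: i => [[|[|//]] lti]; [left|right]; apply: val_inj. Qed.

Section Ideals.
Variable A : comPzRingType.
Implicit Types (I U V : A -> Prop) (a b c p q x y z : A).

Lemma ideal_sum I n (F : 'I_n -> A) :
  is_ideal I -> (forall i, I (F i)) -> I (\sum_(i < n) F i).
Proof. by case=> I0 ID _ IF; apply: (big_ind I). Qed.

Lemma gen_ideal_sub I U x :
  is_ideal I -> (forall u, U u -> I u) -> gen_ideal U x -> I x.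
Proof.
move=> II UI [n [r [u [Uu ->]]]]; apply: ideal_sum => // i.
by case: II => _ _ IM; apply/IM/UI.
Qed.

Lemma gen_ideal_subset U V x :
  (forall u, U u -> V u) -> gen_ideal U x -> gen_ideal V x.
Proof. by move=> UV [n [r [u [Uu ->]]]]; exists n, r, u; split=> // i; apply/UV. Qed.

Lemma gen_ideal_in U x : U x -> gen_ideal U x.
Proof.
by move=> Ux; exists 1%N, (fun _ => 1), (fun _ => x); rewrite big_ord1 mul1r.
Qed.

Lemma gen_ideal2P p q z :
  gen_ideal (fun u => u = p \/ u = q) z <-> exists s t, z = s * p + t * q.
Proof.
split=> [|[s [t ->]]]; last first.
  exists 2%N, (fun i : 'I_2 => if i == ord0 then s else t).
  exists (fun i : 'I_2 => if i == ord0 then p else q).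
  by split=> [i|]; [case: (i == ord0); [left|right] | rewrite big_ord2].
apply: (@gen_ideal_sub (fun z => exists s t, z = s * p + t * q)) => [|u [->|->]].
- split; first by exists 0, 0; rewrite !mul0r addr0.
    by move=> _ _ [s [t ->]] [s' [t' ->]]; exists (s + s'), (t + t'); rewrite !mulrDl addrACA.
  by move=> c _ [s [t ->]]; exists (c * s), (c * t); rewrite mulrDr !mulrA.
- by exists 1, 0; rewrite mul1r mul0r addr0.
- by exists 0, 1; rewrite mul1r mul0r add0r.
Qed.

Lemma gen_idealU1 I y z : is_ideal I ->
  gen_ideal (fun u => I u \/ u = y) z -> exists x c, I x /\ z = x + c * y.
Proof.
move=> [I0 ID IM].
apply: (@gen_ideal_sub (fun z => exists x c, I x /\ z = x + c * y)) => [|u [Iu|->]].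
- split; first by exists 0, 0; rewrite mul0r addr0.
    move=> _ _ [x [c [Ix ->]]] [x' [c' [Ix' ->]]].
    by exists (x + x'), (c + c'); rewrite mulrDl addrACA; split=> //; apply: ID.
  move=> r _ [x [c [Ix ->]]].
  by exists (r * x), (r * c); rewrite mulrDr mulrA; split=> //; apply: IM.
- by exists u, 0; rewrite mul0r addr0.
- by exists 0, 1; rewrite mul1r add0r.
Qed.

Lemma Jac_cancel I a b c : is_ideal I -> Jac I a -> I (c * (1 - a * b)) -> I c.
Proof.
move=> II Ja Ic; have [x [d [Ix E1]]] := gen_idealU1 II (Ja b).
have [_ ID IM] := II.
by rewrite -[c]mulr1 E1 mulrDr mulrCA; apply: ID; apply: IM.
Qed.

End Ideals.

Section Regular.
Variable A : comPzRingType.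
Implicit Types (a c : A).

Lemma regularX a n : regular a -> regular (a ^+ n).
Proof.
move=> Ra; elim: n => [|n IH] b; first by rewrite expr0 mul1r.
by rewrite exprS -mulrA => /Ra /IH.
Qed.

Lemma regular_mulIr c : regular c -> injective ( *%R c).
Proof.
by move=> Rc x y /eqP; rewrite -subr_eq0 -mulrBr => /eqP /Rc /eqP; rewrite subr_eq0 => /eqP.
Qed.

Lemma idomain_nilpotent_or_regular (R : idomainType) (a : R) :
  nilpotent_el a \/ regular a.
Proof.
have [->|a0] := eqVneq a 0; first by left; exists 1%N; rewrite expr1.
by right=> b /eqP; rewrite mulf_eq0 (negbTE a0) => /eqP.
Qed.

End Regular.

Section KrullDimensionOne.
Variable A : comPzRingType.

Let of_pair {T : Type} (x0 x1 : T) (i : 'I_2) : T := if i == ord0 then x0 else x1.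

Lemma krull_generators2 (x : 'I_2 -> A) (e : 'I_2 -> nat) y :
  (exists i : 'I_2, y = (\prod_(j < 2 | (j < i)%N) x j ^+ e j) * x i ^+ (e i).+1)
  <-> y = x ord0 ^+ (e ord0).+1 \/ y = x ord0 ^+ e ord0 * x ord_max ^+ (e ord_max).+1.
Proof.
have prod_lt (i : 'I_2) :
    \prod_(j < 2 | (j < i)%N) x j ^+ e j = if i == ord0 then 1 else x ord0 ^+ e ord0.
  by rewrite big_mkcond big_ord2; case: (ord2_cases i) => -> /=; rewrite ?mulr1 ?mul1r.
split=> [[i ->]|[->|->]].
- by case: (ord2_cases i) => ->; rewrite prod_lt /=; [left; rewrite mul1r | right].
- by exists ord0; rewrite prod_lt mul1r.
- by exists ord_max; rewrite prod_lt.
Qed.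

Lemma krull_dim_le1P : krull_dim_le A 1 <->
  forall x0 x1 : A, exists e0 e1 s t,
    x0 ^+ e0 * x1 ^+ e1 = s * x0 ^+ e0.+1 + t * (x0 ^+ e0 * x1 ^+ e1.+1).
Proof.
split=> [HK x0 x1 | H x].
  have [e] := HK (of_pair x0 x1); rewrite big_ord2.
  move=> /(gen_ideal_subset (fun y => proj1 (krull_generators2 _ _ y))) /gen_ideal2P [s [t E]].
  by exists (e ord0), (e ord_max), s, t.
have [e0 [e1 [s [t E]]]] := H (x ord0) (x ord_max).
exists (of_pair e0 e1); rewrite big_ord2 /= E.
apply: (gen_ideal_subset (fun y => proj2 (krull_generators2 _ _ y))).
by apply/gen_ideal2P; exists s, t.
Qed.

Lemma krull_dim_le1_regular (r a : A) : krull_dim_le A 1 -> regular r ->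
  exists e s t, a ^+ e = s * r + t * a ^+ e.+1.
Proof.
move=> /krull_dim_le1P HK Rr; have [e0 [e1 [s [t E]]]] := HK r a.
exists e1, s, t; apply: (regular_mulIr (regularX (n := e0) Rr)).
by rewrite E mulrDr exprSr [r ^+ e0 * (s * _)]mulrCA [r ^+ e0 * (t * _)]mulrCA.
Qed.

End KrullDimensionOne.

Lemma Jacobson_krull_dim_le1 (A : comPzRingType) :
  (forall a : A, nilpotent_el a \/ regular a) ->
  krull_dim_le A 1 ->
  (forall I : A -> Prop, is_ideal I ->
     (exists a : A, Jac I a /\ regular a) -> exists a : A, I a /\ regular a) ->
  Jacobson A.
Proof.
move=> nil_or_reg HK Jac_reg I II a Ja.
have [[n an0]|Ra] := nil_or_reg a.
  by exists n; apply: gen_ideal_in; rewrite an0; case: II.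
have [r [Ir Rr]] := Jac_reg I II (ex_intro _ a (conj Ja Ra)).
have [e [s [t E]]] := krull_dim_le1_regular a HK Rr.
exists e; apply: gen_ideal_in; apply: (Jac_cancel II Ja (b := t)).
rewrite mulrBr mulr1 mulrA -exprSr [_ * t]mulrC {1}E addrK.
by case: II => _ _; apply.
Qed.

Lemma nondecreasing_bounded_stationary (g : nat -> nat) N :
  (forall k, g k <= g k.+1)%N -> (forall k, g k <= N)%N ->
  exists k, g k.+1 = g k.
Proof.
move=> g_incr g_le; case: (boolP [exists k : 'I_N.+1, g k.+1 == g k]).
  by case/existsP=> k /eqP; exists k.
rewrite negb_exists => /forallP g_neq.
suff le_g k : (k <= N.+1)%N -> (k <= g k)%N.
  by move: (le_g _ (leqnn _)); rewrite leqNgt ltnS g_le.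
elim: k => // k IH ltk; apply: leq_ltn_trans (IH (ltnW ltk)) _.
by rewrite ltn_neqAle [g k == _]eq_sym (g_neq (Ordinal ltk)) g_incr.
Qed.

Lemma gcdn_expn_stationary (a b : nat) : (0 < a)%N ->
  exists k, gcdn a (b ^ k.+1) = gcdn a (b ^ k).
Proof.
move=> a0; apply: (@nondecreasing_bounded_stationary _ a) => k.
  apply: dvdn_leq; first by rewrite gcdn_gt0 a0.
  rewrite dvdn_gcd dvdn_gcdl /= (dvdn_trans (dvdn_gcdr _ _)) //.
  by rewrite expnS dvdn_mull.
by apply: dvdn_leq => //; apply: dvdn_gcdl.
Qed.

Lemma krull_dim_le1_int : krull_dim_le int 1.
Proof.
apply/krull_dim_le1P => x0 x1.
have [->|x0n] := eqVneq x0 0.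
  by exists 1%N, 0%N, 0, 0; rewrite !mul0r addr0.
have [k gcd_eq] : exists k, gcdn `|x0| (`|x1| ^ k.+1) = gcdn `|x0| (`|x1| ^ k).
  by apply: gcdn_expn_stationary; rewrite absz_gt0.
have [u [v bezout]] := Bezoutz x0 (x1 ^+ k.+1).
have : (gcdz x0 (x1 ^+ k.+1) %| x1 ^+ k)%Z.
  by rewrite dvdzE /gcdz absz_nat !abszX gcd_eq dvdn_gcdr.
case/dvdzP=> q xk; exists 0%N, k, (q * u), (q * v).
by rewrite expr0 expr1 !mul1r {1}xk -bezout mulrDr !mulrA.
Qed.

Lemma int_regular_in_ideal (I : int -> Prop) : is_ideal I ->
  (exists a : int, Jac I a /\ regular a) -> exists a : int, I a /\ regular a.
Proof.
move=> II [a [Ja Ra]]; have [x [c [Ix E]]] := gen_idealU1 II (Ja 3).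
have [x0|xn0] := eqVneq x 0.
  have a0 : a != 0.
    by apply/eqP=> a0; have := Ra 1; rewrite a0 mul0r => /(_ erefl) /eqP; rewrite oner_eq0.
  have : (1 - a * 3 %| 1)%Z by apply/dvdzP; exists c; rewrite -[c * _]add0r -x0; exact: E.
  by rewrite dvdz1; lia.
by exists x; split=> // b /eqP; rewrite mulf_eq0 (negbTE xn0) => /eqP.
Qed.

Theorem mainTheorem12 :
  (forall A : comPzRingType,
     (forall a : A, nilpotent_el a \/ regular a) ->
     krull_dim_le A 1 ->
     (forall I : A -> Prop, is_ideal I ->
        (exists a : A, Jac I a /\ regular a) ->
        exists a : A, I a /\ regular a) ->
     Jacobson A)
  /\ Jacobson int.
Proof.
split; first exact: Jacobson_krull_dim_le1.
apply: Jacobson_krull_dim_le1.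
- exact: idomain_nilpotent_or_regular.
- exact: krull_dim_le1_int.
- exact: int_regular_in_ideal.
Qed.
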